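(* (a) The optimal value function $\mu$ is upper semicontinuous at $0$. (b) If $X^\infty\cap\mathcal{K}(f)=\{0\}$, then $\mu$ is lower semicontinuous at $0$, and hence continuous at $0$.
   Context: Standing assumptions: $f:\mathbb{R}^n\to\mathbb{R}\cup\{\pm\infty\}$ is proper (never $-\infty$ and finite at some point) and lower semicontinuous; $X\subset\mathbb{R}^n$ is a nonempty closed set with $\operatorname{dom}f\cap X$ unbounded. $X^\infty=\{u:\exists t_k\to+\infty,\ \exists x_k\in X,\ x_k/t_k\to u\}$; $f^\infty(d)=\inf\{\liminf_{k} f(t_kd_k)/t_k:\ t_k\to+\infty,\ d_k\to d\}$; $\mathcal{K}(f)=\{d: f^\infty(d)\le 0\}$. For $u\in\mathbb{R}^n$, $f_u(x)=f(x)-\langle u,x\rangle$, and the optimal value function is $\mu(u)=\inf_{x\in X}f_u(x)$ (valued in $\mathbb{R}\cup\{\pm\infty\}$). Upper/lower semicontinuity of $\mu$ at $0$ means $\limsup_{u\to0}\mu(u)\le\mu(0)$ / $\liminf_{u\to0}\mu(u)\ge\mu(0)$. *)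

From HB Require Import structures.
From mathcomp Require Import all_boot all_order all_algebra.
From mathcomp Require Import all_classical all_reals all_analysis.
Set Implicit Arguments. Unset Strict Implicit. Unset Printing Implicit Defensive.
Import Order.TTheory GRing.Theory Num.Theory.
Import numFieldNormedType.Exports.
Local Open Scope classical_set_scope.
Local Open Scope ring_scope.

Section Defs.
Context {R : realType} {n : nat}.
Local Notation V := 'rV[R]_n.

Definition dotp (u x : V) : R := \sum_(i < n) u ord0 i * x ord0 i.

Definition proper_fun (f : V -> \bar R) : Prop :=
  (forall x, f x != -oo%E) /\ (exists x, f x \is a fin_num).

Definition domf (f : V -> \bar R) : set V := [set x | (f x < +oo)%E].

Definition unbounded_set (A : set V) : Prop :=
  ~ (exists M : R, forall x, A x -> `|x| <= M).

Definition asym_cone (X : set V) : set V :=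
  [set u | exists (t : nat -> R) (x : nat -> V),
     t @ \oo --> +oo /\ (forall k, X (x k)) /\
     (fun k => (t k)^-1 *: x k) @ \oo --> u].

Definition asym_fun (f : V -> \bar R) (d : V) : \bar R :=
  ereal_inf [set l | exists (t : nat -> R) (dk : nat -> V),
     [/\ t @ \oo --> +oo, dk @ \oo --> d &
      l = limn_einf (fun k => (f (t k *: dk k) * ((t k)^-1)%:E)%E)]].

Definition Kf (f : V -> \bar R) : set V := [set d | (asym_fun f d <= 0)%E].

Definition fu (f : V -> \bar R) (u : V) (x : V) : \bar R :=
  (f x - (dotp u x)%:E)%E.

Definition optval (f : V -> \bar R) (X : set V) (u : V) : \bar R :=
  ereal_inf (fu f u @` X).

End Defs.

From HB Require Import structures.
From mathcomp Require Import all_boot all_order all_algebra.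
From mathcomp Require Import all_classical all_reals all_analysis.
From mathcomp Require Import lra.
Import Order.TTheory GRing.Theory Num.Theory.
Import numFieldNormedType.Exports.
Local Open Scope classical_set_scope.
Local Open Scope ring_scope.

(* (a) mu is the infimum over x in X of the maps u |-> f x - <u, x>, each
   continuous in u, hence mu is upper semicontinuous.
   (b) If lower semicontinuity failed at 0, there would be u_k -> 0 and
   x_k in X with f x_k - <u_k, x_k> < b < mu 0.  If (x_k) is eventually
   bounded, a cluster point y lies in X and, f being lower semicontinuous,
   f y <= b, against mu 0 <= f y.  Otherwise, along a subsequence with
   |x_k| -> +oo, the directions x_k / |x_k| accumulate at a unit vector d of
   X^oo, and f x_k / |x_k| < |b| / |x_k| + n |u_k| -> 0 puts d in K(f),
   against X^oo /\ K(f) = {0}.  Both one-sided estimates near 0 together give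
   convergence in the extended reals. *)

Lemma lte_dense_fin {R : realType} {x y : \bar R} :
  (x < y)%E -> exists r : R, (x < r%:E < y)%E.
Proof.
case: x => [x||]; case: y => [y||] //=.
- rewrite lte_fin => xy; exists ((x + y) / 2); rewrite !lte_fin; apply/andP; split; lra.
- by move=> _; exists (x + 1); rewrite ltry andbT lte_fin; lra.
- by move=> _; exists (y - 1); rewrite ltNyr lte_fin; lra.
- by move=> _; exists 0; rewrite ltNyr ltry.
Qed.

Lemma fin_num_lt_fin {R : realType} {x : \bar R} {a : R} :
  x != -oo%E -> (x < a%:E)%E -> x \is a fin_num.
Proof. by move=> xNy xa; rewrite fin_numElt ltNye xNy (lt_trans xa (ltry a)). Qed.

Section limf_near_bounds.
Context {R : realType} {T : choiceType} {U : filteredType T}.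
Context {F : set_system U} {FF : ProperFilter F}.
Context {g : U -> \bar R} {l : \bar R}.
Local Open Scope ereal_scope.

Lemma limf_esup_le_near :
  (forall a : R, l < a%:E -> \forall t \near F, g t <= a%:E) -> limf_esup g F <= l.
Proof.
move=> gle; rewrite leNgt; apply/negP => /lte_dense_fin[a /andP[la aS]].
have : limf_esup g F <= a%:E.
  rewrite limf_esupE; apply: ge_ereal_inf.
  exists (ereal_sup (g @` [set t | g t <= a%:E])).
    by exists [set t | g t <= a%:E]; [exact: gle|].
  by apply: ge_ereal_sup => _ [t gt <-].
by rewrite leNgt aS.
Qed.

Lemma limf_einf_ge_near :
  (forall b : R, b%:E < l -> \forall t \near F, b%:E <= g t) -> l <= limf_einf g F.
Proof.
move=> gge; rewrite leNgt; apply/negP => /lte_dense_fin[b /andP[bI bl]].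
have : b%:E <= limf_einf g F.
  rewrite limf_einfE; apply: le_ereal_sup_tmp.
  exists (ereal_inf (g @` [set t | b%:E <= g t])).
    by exists [set t | b%:E <= g t]; [exact: gge|].
  by apply: le_ereal_inf_tmp => _ [t gt <-].
by rewrite leNgt bI.
Qed.

Lemma cvge_near_bounds :
  (forall a : R, l < a%:E -> \forall t \near F, g t <= a%:E) ->
  (forall b : R, b%:E < l -> \forall t \near F, b%:E <= g t) ->
  g @ F --> l.
Proof.
case: l => [r||] gle gge.
- have gnear (e : R) : (0 < e)%R -> \forall t \near F, (r - e)%:E <= g t <= (r + e)%:E.
    move=> e0; near=> t; apply/andP; split; near: t;
      [apply: gge | apply: gle]; rewrite lte_fin; lra.
  apply/fine_cvgP; split.
    apply: filterS (gnear 1%R ltr01) => t /andP[lo hi].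
    by rewrite fin_numElt (lt_le_trans (ltNyr _) lo) (le_lt_trans hi (ltry _)).
  apply/cvgrPdist_le => e e0; apply: filterS (gnear e e0) => t.
  rewrite /=; case: (g t) => [s||] //= /andP[]; rewrite ?lee_fin ?leye_eq // => sge sle.
  by rewrite ler_distlC sge sle.
- by apply/cvgeyPge => A; apply: gge; exact: ltry.
- by apply/cvgeNyPle => A; apply: gle; exact: ltNyr.
Unshelve. all: end_near. Qed.

End limf_near_bounds.

Section sequences_in_metric_spaces.
Context {R : realType} {T : pseudoMetricType R}.

Lemma cvg_ball_natSinv (u : nat -> T) (x : T) :
  (forall k, ball x k.+1%:R^-1 (u k)) -> u @ \oo --> x.
Proof.
move=> ux; apply/cvg_ballP => e e0; near=> k.
apply: le_ball (ux k); apply: ltW; near: k.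
exact: (near_infty_natSinv_lt (PosNum e0)).
Unshelve. all: end_near. Qed.

Lemma not_near_seq (x : T) (P : T -> Prop) :
  ~ (\forall y \near x, P y) -> exists u : nat -> T, u @ \oo --> x /\ forall k, ~ P (u k).
Proof.
move=> notP.
have witness k : exists y, ball x k.+1%:R^-1 y /\ ~ P y.
  apply: contrapT => /forallNP noy; apply: notP; apply/nbhs_ballP.
  exists k.+1%:R^-1 => [|y xy]; first by rewrite /= invr_gt0.
  by apply: contrapT => nPy; apply: (noy y).
have [u uP] := choice witness.
exists u; split => [|k]; last by have [] := uP k.
by apply: cvg_ball_natSinv => k; have [] := uP k.
Qed.

Lemma cluster_subseq {w : nat -> T} {d : T} : cluster (w @ \oo) d ->
  exists q : nat -> nat, (forall j, (j <= q j)%N) /\ w \o q @ \oo --> d.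
Proof.
move=> cld.
have witness j : exists k, (j <= k)%N /\ ball d j.+1%:R^-1 (w k).
  have tail : (w @ \oo) (w @` [set k | (j <= k)%N]) by exists j => // k jk; exists k.
  have dj : (0 : R) < j.+1%:R^-1 by rewrite invr_gt0.
  have [_ [[k jk <-] dwk]] := cld _ _ tail (nbhsx_ballx d _ dj).
  by exists k.
have [q qP] := choice witness.
exists q; split => [j|]; first by have [] := qP j.
by apply: cvg_ball_natSinv => j; have [] := qP j.
Qed.

End sequences_in_metric_spaces.

Lemma cvg_nat_ge_id (m : nat -> nat) : (forall j, (j <= m j)%N) -> m @ \oo --> \oo.
Proof. by move=> jm P [N _ NP]; exists N => // j Nj; apply/NP/(leq_trans Nj). Qed.

Section normed_sequences.
Context {R : realType} {V : normedModType R}.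

Lemma unbounded_subseq (x : nat -> V) :
  ~ (exists M : R, \forall k \near \oo, `|x k| <= M) ->
  exists p : nat -> nat, forall j, (j <= p j)%N /\ j%:R < `|x (p j)|.
Proof.
move=> unb.
suff witness j : exists k, (j <= k)%N /\ j%:R < `|x k|
  by have [p ?] := choice witness; exists p.
apply: contrapT => /forallNP small.
apply: unb; exists j%:R, j => // k jk; rewrite leNgt; apply/negP => jx.
exact: (small k).
Qed.

Lemma near_cvg0_normM_lt {I : Type} {F : set_system I} {FF : Filter F}
    (u : I -> V) (c e : R) :
  u @ F --> 0 -> 0 < e -> \forall t \near F, c * `|u t| < e.
Proof.
move=> u0 e0; have cu : c * `|u t| @[t --> F] --> c * `|0 : V|.
  exact: cvgMl_tmp (cvg_norm u0).
by rewrite normr0 mulr0 in cu; exact: cvgr_lt cu _ e0.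
Qed.

Lemma closed_norm_le (M : R) : closed [set v : V | `|v| <= M].
Proof. exact: (continuous_closedP _).1 (@norm_continuous R V) _ (@closed_le R M). Qed.

Lemma closed_unit_sphere : closed [set v : V | `|v| = 1].
Proof. exact: (continuous_closedP _).1 (@norm_continuous R V) _ (@closed_eq R 1). Qed.

End normed_sequences.

Section rV_norm.
Context {R : realType} {n : nat}.
Local Notation V := 'rV[R]_n.

Lemma norm_coord_le (v : V) i : `|v ord0 i| <= `|v|.
Proof.
have /mapP[j _ ->] : `|v ord0 i| \in [seq `|v ij.1 ij.2| | ij : 'I_1 * 'I_n].
  by apply/mapP; exists (ord0, i) => //=; rewrite mem_enum.
by rewrite [leRHS]/Num.norm /= mx_normrE; apply/bigmax_geP; right; exists j.
Qed.

(* The norm of 'rV is the sup norm, whence the factor n. *)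
Lemma dotp_bound (u x : V) : `|dotp u x| <= n%:R * `|u| * `|x|.
Proof.
have -> : n%:R * `|u| * `|x| = \sum_(i < n) `|u| * `|x|.
  by rewrite sumr_const card_ord -mulrA mulr_natl.
apply: le_trans (ler_norm_sum _ _ _) (ler_sum _ _) => i _.
by rewrite normrM ler_pM ?norm_coord_le.
Qed.

Lemma dotp0l (x : V) : dotp 0 x = 0.
Proof. by rewrite /dotp big1 // => i _; rewrite mxE mul0r. Qed.

Lemma compact_closedI_norm_le (A : set V) (M : R) :
  closed A -> compact (A `&` [set v | `|v| <= M]).
Proof.
move=> Acl; apply: bounded_closed_compact; last exact: closedI Acl (closed_norm_le M).
exists M; split; first exact: num_real.
by move=> M' MM' v [_ vM]; apply: le_trans vM (ltW MM').
Qed.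

Lemma compact_unit_sphere : compact [set v : V | `|v| = 1].
Proof.
apply: bounded_closed_compact closed_unit_sphere.
by exists 1; split => // M' M'1 v /= ->; exact: ltW.
Qed.

End rV_norm.

Section optimal_value.
Context {R : realType} {n : nat} (f : 'rV[R]_n -> \bar R) (X : set 'rV[R]_n).
Local Notation V := 'rV[R]_n.
Local Notation mu := (optval f X).
Hypothesis fNy : forall x, f x != -oo%E.

Lemma optval_le_fu u {x} : X x -> (mu u <= fu f u x)%E.
Proof. by move=> Xx; apply: ereal_inf_lbound; exists x. Qed.

Lemma optval_usc_near (a : R) :
  (mu 0 < a%:E)%E -> \forall u \near (0 : V), (mu u <= a%:E)%E.
Proof.
move=> /ereal_inf_lt[_ [x0 Xx0 <-]]; rewrite /fu dotp0l sube0 => fx0a.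
have /EFin_fin_numP[r fx0] := fin_num_lt_fin (fNy x0) fx0a.
move: fx0a; rewrite fx0 lte_fin => ra.
near=> u; apply: le_trans (optval_le_fu u Xx0) _.
rewrite /fu fx0 -EFinD lee_fin.
have small : n%:R * `|x0| * `|u| < a - r.
  by near: u; apply: near_cvg0_normM_lt cvg_id _; rewrite subr_gt0.
have := dotp_bound u x0; rewrite mulrAC.
have := ler_norm (- dotp u x0); rewrite normrN; lra.
Unshelve. all: end_near. Qed.

Lemma Kf_seq {d : V} {t : nat -> R} {dk : nat -> V} :
  t @ \oo --> +oo -> dk @ \oo --> d ->
  (forall a : R, 0 < a ->
    \forall k \near \oo, (f (t k *: dk k) * (t k)^-1%:E <= a%:E)%E) ->
  Kf f d.
Proof.
move=> t_oo dkd small; apply: ge_ereal_inf.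
exists (limn_einf (fun k => f (t k *: dk k) * (t k)^-1%:E)%E); first by exists t, dk.
apply: le_trans (limn_einf_sup _) _; apply: limf_esup_le_near => a.
by rewrite lte_fin; exact: small.
Qed.

Section bad_sequence.
Context {b : R} {u x : nat -> V} {r : nat -> R}.
Hypotheses (u0 : u @ \oo --> (0 : V)) (Xx : forall k, X (x k))
  (fx : forall k, f (x k) = (r k)%:E) (r_lt : forall k, r k < b + dotp (u k) (x k)).

Lemma bad_seq_bounded : lower_semicontinuous f -> closed X ->
  (exists M : R, \forall k \near \oo, `|x k| <= M) -> (mu 0 <= b%:E)%E.
Proof.
move=> flsc Xcl [M xM]; rewrite leNgt; apply/negP => bmu.
have xK : (x @ \oo) (X `&` [set v | `|v| <= M]) by apply: filterS xM => k; split.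
have [y [[Xy _] cly]] := compact_closedI_norm_le X M Xcl _ _ xK.
have bfy : (b%:E < f y)%E.
  by apply: lt_le_trans bmu _; have := optval_le_fu 0 Xy; rewrite /fu dotp0l sube0.
have [a /andP[ba afy]] := lte_dense_fin bfy; rewrite lte_fin in ba.
have [W Wy aW] := flsc y a afy.
have xa : \forall k \near \oo, (f (x k) < a%:E)%E.
  near=> k; rewrite fx lte_fin.
  have small : n%:R * M * `|u k| < a - b.
    by near: k; apply: near_cvg0_normM_lt u0 _; rewrite subr_gt0.
  have xkM : `|x k| <= M by near: k.
  have := dotp_bound (u k) (x k); have := ler_norm (dotp (u k) (x k)).
  have := r_lt k; have : 0 <= n%:R * `|u k| by []; nra.
have [z [fza Wz]] := cly [set v | (f v < a%:E)%E] W xa Wy.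
by have := lt_trans (aW z Wz) fza; rewrite ltxx.
Unshelve. all: end_near. Qed.

Lemma bad_seq_unbounded_direction :
  ~ (exists M : R, \forall k \near \oo, `|x k| <= M) ->
  exists2 d : V, d != 0 & (asym_cone X `&` Kf f) d.
Proof.
move=> /unbounded_subseq[p pP].
have xp_gt0 j : 0 < `|x (p j)| := le_lt_trans (ler0n _ j) (pP j).2.
pose w j := `|x (p j)|^-1 *: x (p j).
have w_sphere : (w @ \oo) [set v | `|v| = 1].
  by exists 0%N => // j _; rewrite /= normrZ normfV normr_id mulVf ?gt_eqF.
have [d [d1 cld]] := compact_unit_sphere _ _ w_sphere.
have [q [qj wq]] := cluster_subseq cld.
pose t j := `|x (p (q j))|.
have t_ge j : j%:R <= t j.
  by apply: le_trans (ltW (pP (q j)).2); rewrite ler_nat qj.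
have t_oo : t @ \oo --> +oo.
  apply/cvgryPge => A; near=> j; apply: le_trans (t_ge j).
  by near: j; exact: nbhs_infty_ger.
have upq0 : u \o (p \o q) @ \oo --> (0 : V).
  apply: cvg_comp u0; apply: cvg_nat_ge_id => j.
  exact: leq_trans (qj j) (pP (q j)).1.
exists d.
  by apply/eqP => d0; move: d1; rewrite /= d0 normr0 => /eqP; rewrite eq_sym oner_eq0.
split.
  by exists t, (x \o (p \o q)); split=> //; split=> [k|]; [exact: Xx | exact wq].
apply: (Kf_seq t_oo wq) => a a0; near=> j.
have bs : `|b| * `|(t j)^-1| < a / 2.
  near: j; apply: near_cvg0_normM_lt (_ : (t k)^-1 @[k --> \oo] --> 0) _; last by lra.
  by apply/gtr0_cvgV0 => //; apply: nearW => k; exact: xp_gt0.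
have nv : n%:R * `|u (p (q j))| < a / 2.
  by near: j; apply: near_cvg0_normM_lt upq0 _; lra.
rewrite /w /t scalerA mulfV ?gt_eqF // scale1r fx -EFinM lee_fin.
have := r_lt (p (q j)); have := dotp_bound (u (p (q j))) (x (p (q j))).
move: bs nv (xp_gt0 (q j)); rewrite /t; move: (p (q j)) => k bs nv xk0 db rlt.
rewrite normfV normr_id ltr_pdivrMr // in bs.
rewrite ler_pdivrMr //.
have := ler_norm (dotp (u k) (x k)); have := ler_norm b; nra.
Unshelve. all: end_near. Qed.

End bad_sequence.

Lemma optval_lsc_near : lower_semicontinuous f -> closed X ->
  asym_cone X `&` Kf f = [set 0] ->
  forall b : R, (b%:E < mu 0)%E -> \forall u \near (0 : V), (b%:E <= mu u)%E.
Proof.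
move=> flsc Xcl HK b bmu; apply: contrapT => /not_near_seq[u [u0 mub]].
have witness k : exists xr : V * R,
    [/\ X xr.1, f xr.1 = xr.2%:E & xr.2 < b + dotp (u k) xr.1].
  have /ereal_inf_lt[_ [x Xx <-]] : (mu (u k) < b%:E)%E by rewrite ltNge; exact/negP.
  rewrite /fu lteBlDr // -EFinD => fxb.
  have /EFin_fin_numP[r fxr] := fin_num_lt_fin (fNy x) fxb.
  by exists (x, r); split => //; rewrite -lte_fin -fxr.
have [xr xrP] := choice witness.
pose x k := (xr k).1; pose r k := (xr k).2.
have Xx k : X (x k) by have [] := xrP k.
have fx k : f (x k) = (r k)%:E by have [] := xrP k.
have r_lt k : r k < b + dotp (u k) (x k) by have [] := xrP k.
have [bdd|unb] := pselect (exists M : R, \forall k \near \oo, `|x k| <= M).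
- by have := bad_seq_bounded u0 Xx fx r_lt flsc Xcl bdd; rewrite leNgt bmu.
- have [d d0 dHK] := bad_seq_unbounded_direction u0 Xx fx r_lt unb.
  by move: dHK; rewrite HK => /= d0'; rewrite d0' eqxx in d0.
Qed.

End optimal_value.

Theorem mainTheorem8 (R : realType) (n : nat) (f : 'rV[R]_n -> \bar R)
  (X : set 'rV[R]_n) :
  proper_fun f -> lower_semicontinuous f ->
  closed X -> X !=set0 -> unbounded_set (domf f `&` X) ->
  (limf_esup (optval f X) (nbhs (0%R : 'rV[R]_n)) <= optval f X (0%R : 'rV[R]_n))%E /\
  (asym_cone X `&` Kf f = [set 0] ->
     (limf_einf (optval f X) (nbhs (0%R : 'rV[R]_n)) >= optval f X (0%R : 'rV[R]_n))%E /\
     optval f X u @[u --> (0%R : 'rV[R]_n)] --> optval f X (0%R : 'rV[R]_n)).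
Proof.
move=> [fNy _] flsc Xcl _ _; have usc := optval_usc_near f X fNy.
split; first exact: limf_esup_le_near.
move=> HK; have lsc := optval_lsc_near f X fNy flsc Xcl HK.
by split; [exact: limf_einf_ge_near | exact: cvge_near_bounds usc lsc].
Qed.
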